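(* Let $X=\prod_{i\in I}X_i$ be a topological product and suppose that a subspace $Y$ of $X$ fills all finite subproducts of $X$ and is $C^\ast$-embedded in $X$. If $Y$ is a $T_{3.5}$-space, then each factor $X_i$ is also a $T_{3.5}$-space.
   Context: For nonempty $J\subseteq I$, $\pi_J\colon X\to X_J=\prod_{i\in J}X_i$ is the projection. A set $Y\subseteq X$ fills finite subproducts of $X$ if $\pi_J(Y)=X_J$ for every finite nonempty $J\subseteq I$. $Y$ is $C^\ast$-embedded in $X$ if every bounded continuous real-valued function on $Y$ extends to a continuous real-valued function on $X$. A space is $T_{3.5}$ if for every closed set $F$ and point $x\notin F$ there is a continuous $f\colon X\to\mathbb{R}$ with $f(x)=1$ and $f(F)\subseteq\{0\}$ (no $T_1$ assumed). *)

From HB Require Import structures.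
From mathcomp Require Import all_boot all_order all_algebra.
From mathcomp Require Import all_classical all_reals all_analysis.
From mathcomp Require Import Rstruct Rstruct_topology.
From Stdlib Require Import Rdefinitions.
Set Implicit Arguments. Unset Strict Implicit. Unset Printing Implicit Defensive.
Import Order.TTheory GRing.Theory Num.Theory.
Local Open Scope classical_set_scope.
Local Open Scope ring_scope.

(** T_{3.5} (completely regular, no T_1 assumed): points and closed sets are
    separated by continuous real-valued functions. *)
Definition T35 (T : topologicalType) : Prop :=
  forall (F : set T) (x : T), closed F -> ~ F x ->
    exists f : T -> Rdefinitions.R,
      continuous f /\ f x = 1 /\ (forall y, F y -> f y = 0).

Definition C_star_embedded (X : topologicalType) (Y : set X) : Prop :=
  forall f : set_type Y -> Rdefinitions.R, continuous f ->
    (exists M : Rdefinitions.R, forall y, `|f y| <= M) ->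
    exists g : X -> Rdefinitions.R,
      continuous g /\ forall y : set_type Y, g (set_val y) = f y.

(** Y fills finite subproducts: for every finite nonempty J ⊆ I, the
    projection pi_J maps Y onto X_J = prod_{i in J} X_i (elements of X_J
    are dependent functions on J). *)
Definition fills_finite_subproducts (I : Type) (X : I -> Type)
    (Y : set (forall i, X i)) : Prop :=
  forall J : set I, finite_set J -> J !=set0 ->
    forall z : (forall i, J i -> X i),
      exists y, Y y /\ forall i (hi : J i), y i = z i hi.

From HB Require Import structures.
From mathcomp Require Import all_boot all_order all_algebra.
From mathcomp Require Import all_classical all_reals all_analysis.
From mathcomp Require Import Rstruct Rstruct_topology.
Set Implicit Arguments. Unset Strict Implicit. Unset Printing Implicit Defensive.
Local Open Scope classical_set_scope.
Import Order.TTheory Num.Theory.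
Local Open Scope ring_scope.

(* Separate a closed set F of X_i from a point x by embedding X_i into the
   product as the slice through a point y0 of Y with y0_i = x.  A continuous
   h on Y that is 1 at y0 and 0 on the trace of pi_i^-1(F), clamped to
   [0, 1], extends to some g on X.  Because Y fills finite subproducts, the
   trace of pi_i^-1(F) on Y is dense in pi_i^-1(F), so g vanishes on all of
   pi_i^-1(F); restricting g to the slice separates x from F. *)

Lemma closure_sub_preimage_closed (S T : topologicalType) (f : S -> T)
    (A : set S) (D : set T) :
  continuous f -> closed D -> A `<=` f @^-1` D -> closure A `<=` f @^-1` D.
Proof.
move=> cf clD AD; rewrite ((closure_id _).1 ((continuous_closedP _).1 cf D clD)).
exact: closureS.
Qed.

Lemma T35_separate_bounded (T : topologicalType) (F : set T) (x : T) :
  T35 T -> closed F -> ~ F x ->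
  exists f : T -> Rdefinitions.R,
    [/\ continuous f, forall y, `|f y| <= 1, f x = 1 & forall y, F y -> f y = 0].
Proof.
move=> T35T clF nFx; have [h [ch [hx hF]]] := T35T F x clF nFx.
exists ((h \min cst 1) \max cst 0); split.
- move=> y; apply: continuous_max; last exact: cst_continuous.
  by apply: continuous_min; [exact: ch | exact: cst_continuous].
- move=> y; rewrite /= ger0_norm ?le_max ?lexx ?orbT //.
  by rewrite ge_max ler01 ge_min lexx orbT.
- by rewrite /= hx min_l // max_l ?ler01.
- by move=> y Fy; rewrite /= hF // min_l ?ler01 // maxxx.
Qed.

Section FillingSubspace.
Variables (I : Type) (X : I -> topologicalType) (Y : set (prod_topology X)).

Lemma subspace_proj_continuous (i : I) :
  continuous (fun y : set_type Y => set_val y i).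
Proof.
move=> y; apply: (@continuous_comp _ _ _ set_val (fun w : prod_topology X => w i)).
  exact: initial_continuous.
exact: (@proj_continuous {classic I} X i).
Qed.

Hypothesis fill : fills_finite_subproducts Y.

Lemma fills_proj_surjective (i : I) (t : X i) : exists2 y, Y y & y i = t.
Proof.
have [y [Yy yt]] := fill (finite_set1 i) (ex_intro _ i erefl)
  (fun j (ij : [set i] j) => match esym ij in _ = k return X k with erefl => t end).
by exists y; rewrite // (yt i erefl).
Qed.

(* The sets of points of Y agreeing with z on a finite set of coordinates
   containing i form a filter base converging to z in the product topology. *)
Lemma fills_nbhs_agree (i : I) (z : prod_topology X) (N : set (prod_topology X)) :
  nbhs z N -> exists2 w, (Y `&` N) w & w i = z i.
Proof.
move=> Nz.
pose D := [set J : set I | finite_set J /\ J i].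
pose B J := [set w : prod_topology X | Y w /\ forall j, J j -> w j = z j].
have filterB : Filter (filter_from D B).
  apply: filter_from_filter; first by exists [set i]; split => //; exact: finite_set1.
  move=> J1 J2 [fJ1 iJ1] [fJ2 iJ2]; exists (J1 `|` J2).
    by split; [rewrite finite_setU | left].
  by move=> w [Yw wz]; split; split => // j Jj; apply: wz; [left | right].
have B_cvg : filter_from D B --> z.
  apply/cvg_sup => j A /= [_ [[V oV <-] Vz VA]].
  rewrite nbhs_filterE; exists ([set i] `|` [set j]).
    by split; [rewrite finite_setU; split; exact: finite_set1 | left].
  by move=> w [Yw wz]; apply: VA => /=; rewrite wz //; right.
have [J [fJ Ji] BJN] := B_cvg N Nz.
have [w [Yw wz]] := fill fJ (ex_intro _ i Ji) (fun j _ => z j).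
by exists w; [split; last apply: BJN | rewrite wz].
Qed.

Lemma proj_preimage_sub_closure (i : I) (F : set (X i)) :
  [set z | F (z i)] `<=` closure (Y `&` [set z | F (z i)]).
Proof.
move=> z Fz N /(fills_nbhs_agree i) [w [Yw Nw] wz].
by exists w; split; rewrite //= wz.
Qed.

End FillingSubspace.

Theorem proposition3p3 (I : Type) (X : I -> topologicalType)
  (Y : set (prod_topology X)) :
  fills_finite_subproducts Y ->
  C_star_embedded Y ->
  T35 (set_type Y) ->
  forall i : I, T35 (X i).
Proof.
move=> fill CY T35Y i F x clF nFx.
have [y0 Yy0 y0x] := fills_proj_surjective fill x.
pose F' := [set y : set_type Y | F (set_val y i)].
have clF' : closed F'.
  exact: (continuous_closedP _).1 (@subspace_proj_continuous _ _ Y i) F clF.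
pose y0' : set_type Y := exist _ y0 (mem_set Yy0).
have nF'y0 : ~ F' y0' by rewrite /F' /= set_valE /= y0x.
have [h [ch hb hy0 hF']] := T35_separate_bounded T35Y clF' nF'y0.
have [g [cg gh]] := CY h ch (ex_intro _ 1 hb).
have g0 : [set z | F (z i)] `<=` g @^-1` [set 0].
  move=> z /(proj_preimage_sub_closure fill).
  apply: (closure_sub_preimage_closed cg (@closed_eq _ 0)).
  by move=> w [Yw Fw]; rewrite /= -[w]/(set_val (exist _ w (mem_set Yw))) gh hF'.
exists (fun t => g (@dfwith {classic I} X y0 i t)); split; last split.
- move=> t; apply: continuous_comp (cg _).
  exact: (@dfwith_continuous {classic I} X y0 i t).
- have -> : @dfwith {classic I} X y0 i x = y0.
    by apply: functional_extensionality_dep => j; case: dfwithP => //; rewrite y0x.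
  by rewrite -hy0 -(gh y0').
- move=> t Ft; apply: g0 => /=; rewrite dfwithin; exact: Ft.
Qed.
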